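(* Let $n,k$ be integers with $2\le k\le n$. Every $A\in\mathcal{S}^{n,k}$ has at most $n-k$ negative eigenvalues (counted with multiplicity).
   Context: For integers $2\le k\le n$, the $k$-PSD closure $\mathcal{S}^{n,k}$ is the set of all $n\times n$ real symmetric matrices all of whose $k\times k$ principal submatrices are positive semidefinite. *)

From mathcomp Require Import all_boot all_order all_algebra.
From mathcomp Require Import polyrcf.
From mathcomp Require Import reals.
Set Implicit Arguments. Unset Strict Implicit. Unset Printing Implicit Defensive.
Import Order.TTheory GRing.Theory Num.Theory.
Local Open Scope ring_scope.

Definition symmetric_mx (R : realType) (n : nat) (A : 'M[R]_n) : Prop :=
  A^T = A.

Definition psd_mx (R : realType) (n : nat) (A : 'M[R]_n) : Prop :=
  symmetric_mx A /\ forall x : 'cV[R]_n, 0 <= (x^T *m A *m x) 0 0.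

Definition principal_submx (R : realType) (n k : nat) (f : 'I_k -> 'I_n)
  (A : 'M[R]_n) : 'M[R]_k := \matrix_(i, j) A (f i) (f j).

Definition kPSD_closure (R : realType) (n k : nat) (A : 'M[R]_n) : Prop :=
  symmetric_mx A /\
  forall f : 'I_k -> 'I_n, (forall i j : 'I_k, (i < j)%N -> (f i < f j)%N) ->
    psd_mx (principal_submx f A).

Definition num_neg_eigenvalues (R : realType) (n : nat) (A : 'M[R]_n) : nat :=
  (\sum_(x <- rootsR (char_poly A) | (x < 0)%R) mup x (char_poly A))%N.

From mathcomp Require Import all_boot all_order all_algebra.
From mathcomp Require Import polyrcf reals.
From mathcomp Require Import complex sesquilinear spectral.
Set Implicit Arguments. Unset Strict Implicit. Unset Printing Implicit Defensive.
Import Order.TTheory GRing.Theory Num.Theory.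
Local Open Scope ring_scope.

(* Diagonalise A by a unitary matrix P over the complex numbers (MathComp's
   spectral theorem needs an algebraically closed field).  If A had more than
   n - k negative eigenvalues, the rows of P belonging to them would span a
   space on which the hermitian form of A is negative definite and which
   meets, in a nonzero vector, the k-dimensional coordinate space of a PSD
   principal submatrix, where the form is nonnegative. *)

Lemma sum_count_mem_le (T : eqType) (P : pred T) (s t : seq T) : uniq s ->
  (\sum_(x <- s | P x) count_mem x t <= count P t)%N.
Proof.
move=> s_uniq; elim: t => [|y t IHt] /=; first by rewrite big1.
rewrite big_split /= leq_add //.
have [Py|NPy] := boolP (P y); last first.
  by rewrite big1 // => x Px; case: eqP => // yx; rewrite yx Px in NPy.
rewrite (leq_trans _ (leq_b1 (y \in s))) // -(count_uniq_mem y s_uniq).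
rewrite -sum1_count [leqLHS]big_mkcond [leqRHS]big_mkcond /=.
by apply: leq_sum => x _; rewrite eq_sym; case: (P x); case: (x == y).
Qed.

Lemma char_poly_similar (F : fieldType) n (P D : 'M[F]_n) : P \in unitmx ->
  char_poly (invmx P *m D *m P) = char_poly D.
Proof.
move=> P_unit; rewrite /char_poly /char_poly_mx.
set Q := map_mx polyC P; set Q' := map_mx polyC (invmx P).
have mulQ'Q : Q' *m Q = 1%:M by rewrite -map_mxM mulVmx // map_mx1.
have -> : 'X%:M - map_mx polyC (invmx P *m D *m P) =
   Q' *m ('X%:M - map_mx polyC D) *m Q.
  rewrite !map_mxM mulmxBr mulmxBl -!mulmxA; congr (_ - _).
  by rewrite -scalar_mxC mulmxA mulQ'Q mul1mx.
rewrite !det_mulmx mulrC mulrA -det_mulmx.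
by rewrite (_ : Q *m Q' = 1%:M) ?det1 ?mul1r //; exact/mulmx1C.
Qed.

Lemma rowsub_free (F : fieldType) m n p (f : 'I_p -> 'I_m) (A : 'M[F]_(m, n)) :
  injective f -> row_free A -> row_free (rowsub f A).
Proof.
move=> f_inj A_free; rewrite rowsubE /row_free mxrankMfree //.
apply/row_freeP; exists (rowsub f 1%:M)^T.
by apply/matrixP => i j; rewrite -rowsubE !mxE (inj_eq f_inj) eq_sym.
Qed.

Lemma capmx_neq0 (F : fieldType) m1 m2 n (U : 'M[F]_(m1, n)) (V : 'M_(m2, n)) :
  (n < \rank U + \rank V)%N -> (U :&: V)%MS != 0.
Proof.
move=> lt_n; rewrite -mxrank_eq0 -lt0n -(ltn_add2l (\rank (U + V))) addn0.
by rewrite mxrank_sum_cap; apply: leq_trans lt_n; rewrite ltnS rank_leq_col.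
Qed.

Section HermitianForm.
Variable C : numClosedFieldType.
Local Open Scope sesquilinear_scope.

Lemma diag_form_lt0 n (d w : 'rV[C]_n) :
  w != 0 -> (forall i, w 0 i != 0 -> d 0 i < 0) ->
  (w *m diag_mx d *m w ^t*) 0 0 < 0.
Proof.
move=> w_neq0 w_neg.
have [i0 wi0_neq0] : exists i, w 0 i != 0.
  apply/existsP; apply: contraNT w_neq0; rewrite negb_exists => /forallP w0.
  by apply/eqP/rowP => i; rewrite mxE; apply/eqP/negPn/w0.
have termE i : (w *m diag_mx d) 0 i * (w ^t*) i 0 = d 0 i * `|w 0 i| ^+ 2.
  by rewrite mul_mx_diag !mxE mulrAC mulrC normCK.
rewrite mxE (bigD1 i0) //= -[ltRHS]addr0 ltr_leD //.
  by rewrite termE nmulr_rlt0 ?w_neg // exprn_gt0 // normr_gt0.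
apply: sumr_le0 => i _; rewrite termE.
have [->|wi_neq0] := eqVneq (w 0 i) 0; first by rewrite normr0 expr0n mulr0.
by rewrite nmulr_rle0 ?w_neg // exprn_ge0.
Qed.

Lemma form_unitary_conj n (P D : 'M[C]_n) (w : 'rV_n) : P \is unitarymx ->
  (w *m P) *m (invmx P *m D *m P) *m (w *m P) ^t* = w *m D *m w ^t*.
Proof.
by move=> P_unitary; rewrite invmx_unitary // trmx_mul map_mxM !mulmxA !mulmxtVK.
Qed.

Lemma card_neg_spectral_diag_le n m (H : 'M[C]_n) (V : 'M[C]_(m, n)) :
  H \is hermsymmx ->
  (forall y : 'rV_m, 0 <= (y *m V *m H *m (y *m V) ^t*) 0 0) ->
  (#|[set i | (spectral_diag H 0 i < 0)%R]| + \rank V <= n)%N.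
Proof.
move=> H_herm V_ge0; have /orthomx_spectralP H_eq := hermitian_normalmx H_herm.
set P := spectralmx H in H_eq; set d := spectral_diag H in H_eq *.
set N := [set i | d 0 i < 0]; rewrite leqNgt; apply/negP => lt_n.
pose g : 'I_#|N| -> 'I_n := enum_val.
have U_free : row_free (rowsub g P).
  by apply: rowsub_free; [exact: enum_val_inj | rewrite row_free_unit spectral_unit].
have /capmx_neq0 : (n < \rank (rowsub g P) + \rank V)%N by rewrite (eqP U_free).
rewrite -nz_row_eq0; set z := nz_row _ => z_neq0.
have /submxP [w0 zU] : (z <= rowsub g P)%MS.
  exact: submx_trans (nz_row_sub _) (capmxSl _ _).
have /submxP [y zV] : (z <= V)%MS by exact: submx_trans (nz_row_sub _) (capmxSr _ _).
pose w := w0 *m rowsub g 1%:M.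
have zw : z = w *m P by rewrite zU rowsubE mulmxA.
have w_neg i : w 0 i != 0 -> d 0 i < 0.
  apply: contraNT => i_notin_N; rewrite mxE big1 // => l _; rewrite !mxE.
  case: eqP => [gl|]; last by rewrite mulr0.
  by have := enum_valP l; rewrite -/(g l) gl inE (negbTE i_notin_N).
have w_neq0 : w != 0 by apply: contraNneq z_neq0 => w0'; rewrite zw w0' mul0mx.
have := diag_form_lt0 w_neq0 w_neg.
rewrite -(form_unitary_conj (diag_mx d) w (spectral_unitarymx H)) -H_eq -zw zV => /lt_geF.
by rewrite V_ge0.
Qed.

End HermitianForm.

Section RealSymmetric.
Variable R : realType.
Local Notation toC := (real_complex R).
Local Open Scope sesquilinear_scope.

Lemma conj_map_mx_real m n (M : 'M[R]_(m, n)) :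
  map_mx Num.conj (map_mx toC M) = map_mx toC M.
Proof.
by apply/matrixP => i j; rewrite !mxE; apply/CrealP/complex_realP; exists (M i j).
Qed.

Lemma hermitian_form_rect n (A : 'M[R]_n) (a b : 'rV[R]_n) : A^T = A ->
  let x := map_mx toC a + 'i%C *: map_mx toC b in
  x *m map_mx toC A *m x ^t* = map_mx toC (a *m A *m a^T + b *m A *m b^T).
Proof.
move=> A_sym x.
have xt : x ^t* = (map_mx toC a)^T - 'i%C *: (map_mx toC b)^T.
  rewrite /x linearD linearZ /= map_mxD map_mxZ !map_trmx !conj_map_mx_real -scaleNr.
  by congr (_ + _ *: _); apply/eqP; rewrite eq_complex /= oppr0 !eqxx.
have cross : b *m A *m a^T = a *m A *m b^T.
  rewrite [LHS]mx11_scalar -tr_scalar_mx -mx11_scalar.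
  by rewrite !trmx_mul trmxK A_sym mulmxA.
rewrite xt /x !mulmxDl !mulmxBr -!scalemxAl -!scalemxAr !map_trmx -!map_mxM.
rewrite scalerA -expr2 sqr_i scaleN1r opprK map_mxD cross.
by rewrite addrAC [_ *: _ + _]addrC addrA addrK.
Qed.

Lemma complexified_form_ge0 m n (A : 'M[R]_n) (V : 'M[R]_(m, n)) : A^T = A ->
  (forall y : 'rV_m, 0 <= (y *m V *m A *m (y *m V)^T) 0 0) ->
  forall y : 'rV[R[i]]_m,
    0 <= (y *m map_mx toC V *m map_mx toC A *m (y *m map_mx toC V) ^t*) 0 0.
Proof.
move=> A_sym V_ge0 y.
have -> : y = map_mx toC (map_mx (@complex.Re R) y)
              + 'i%C *: map_mx toC (map_mx (@complex.Im R) y).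
  by apply/matrixP => i j; rewrite !mxE [LHS]complexE.
rewrite mulmxDl -scalemxAl -!map_mxM hermitian_form_rect // mxE ler0c mxE.
exact: addr_ge0 (V_ge0 _) (V_ge0 _).
Qed.

Lemma real_sym_hermsym n (A : 'M[R]_n) : A^T = A -> map_mx toC A \is hermsymmx.
Proof.
move=> A_sym; apply: realsym_hermsym.
  by apply/is_hermitianmxP; rewrite expr0 scale1r map_mx_id // map_trmx A_sym.
by apply/mxOverP => i j; rewrite mxE; apply/complex_realP; exists (A i j).
Qed.

Lemma num_neg_eigenvalues_le_spectral n (A : 'M[R]_n) : A^T = A ->
  (num_neg_eigenvalues A <= #|[set i | (spectral_diag (map_mx toC A) 0 i < 0)%R]|)%N.
Proof.
move=> A_sym; have A_herm := real_sym_hermsym A_sym.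
have /orthomx_spectralP A_eq := hermitian_normalmx A_herm.
set P := spectralmx _ in A_eq; set d := spectral_diag _ in A_eq *.
have d_real := hermitian_spectral_diag_real A_herm.
have dE i : d 0 i = (complex.Re (d 0 i))%:C%C by rewrite RRe_real // (mxOverP d_real).
pose r := [seq complex.Re (d 0 i) | i <- enum 'I_n].
have charA : char_poly A = \prod_(x <- r) ('X - x%:P).
  apply: (@map_poly_inj _ _ toC).
  rewrite map_char_poly A_eq char_poly_similar ?spectral_unit //.
  rewrite char_poly_trig ?diag_mx_is_trig //.
  rewrite big_map big_enum /= rmorph_prod; apply: eq_bigr => i _.
  by rewrite mxE eqxx mulr1n dE rmorphB /= map_polyX map_polyC.
rewrite /num_neg_eigenvalues charA.
under eq_bigr do rewrite mu_prod_XsubC.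
apply: leq_trans (sum_count_mem_le _ _ (uniq_roots _ _ _)) _.
rewrite -sum1_count big_map big_enum_cond /= -sum1_card.
by apply/eq_leq/eq_bigl => i; rewrite inE [in RHS]dE -(rmorph0 toC) ltcR.
Qed.

Lemma num_neg_eigenvalues_add_rank_le m n (A : 'M[R]_n) (V : 'M[R]_(m, n)) :
  A^T = A -> (forall y : 'rV_m, 0 <= (y *m V *m A *m (y *m V)^T) 0 0) ->
  (num_neg_eigenvalues A + \rank V <= n)%N.
Proof.
move=> A_sym V_ge0; rewrite -(mxrank_map toC).
apply: leq_trans (card_neg_spectral_diag_le (real_sym_hermsym A_sym)
  (complexified_form_ge0 A_sym V_ge0)).
by rewrite leq_add2r num_neg_eigenvalues_le_spectral.
Qed.

End RealSymmetric.

Lemma principal_submxE (R : realType) n k (f : 'I_k -> 'I_n) (A : 'M[R]_n) :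
  principal_submx f A = rowsub f 1%:M *m A *m (rowsub f 1%:M)^T.
Proof.
have -> : (rowsub f 1%:M)^T = colsub f (1%:M : 'M[R]_n).
  by apply/matrixP => i j; rewrite !mxE eq_sym.
by rewrite mulmx_colsub mulmx1 -rowsubE; apply/matrixP => i j; rewrite !mxE.
Qed.

Theorem proposition2 (R : realType) (n k : nat) (A : 'M[R]_n) :
  (2 <= k)%N -> (k <= n)%N -> kPSD_closure k A ->
  (num_neg_eigenvalues A <= n - k)%N.
Proof.
move=> _ le_kn [A_sym A_psd].
pose f := widen_ord le_kn.
have [_ f_psd] := A_psd f (fun i j lt_ij => lt_ij).
have V_free : row_free (rowsub f (1%:M : 'M[R]_n)).
  apply: rowsub_free; last by rewrite row_free_unit unitmx1.
  by move=> i j; rewrite /f => /(congr1 val) /= /val_inj.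
rewrite leq_subRL // addnC -(eqP V_free).
apply: num_neg_eigenvalues_add_rank_le A_sym _ => y.
by have := f_psd y^T; rewrite trmxK principal_submxE trmx_mul !mulmxA.
Qed.
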